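(* Let $p_1,\dots,p_s$ be distinct primes and $m_1,\dots,m_s\ge1$. Let $R$ be a multi-sorted relation on variables $x_{1,1},\dots,x_{1,k_1},\dots,x_{s,1},\dots,x_{s,k_s}$, where $x_{i,j}$ has domain $\mathbb Z_{p_i^{m_i}}$, and suppose $R$ is invariant under the affine operation $x-y+z$ (computed in each $\mathbb Z_{p_i^{m_i}}$). Then $$R(x_{1,1},\dots,x_{s,k_s})=(\mathrm{pr}_{(1,1),\dots,(1,k_1)}R)(x_{1,1},\dots,x_{1,k_1})\times\dots\times(\mathrm{pr}_{(s,1),\dots,(s,k_s)}R)(x_{s,1},\dots,x_{s,k_s}).$$
   Context: For a relation $R$ and a set $I$ of coordinates, $\mathrm{pr}_IR=\{\mathrm{pr}_I\mathbf a:\mathbf a\in R\}$ where $\mathrm{pr}_I\mathbf a$ is the restriction of $\mathbf a$ to the coordinates in $I$. The product $R_1(x_1,\dots,x_r)\times R_2(y_1,\dots,y_t)$ is the relation of all $(x_1,\dots,x_r,y_1,\dots,y_t)$ with $(x_1,\dots,x_r)\in R_1$ and $(y_1,\dots,y_t)\in R_2$. $R$ invariant under the affine operation means: for all $\mathbf a,\mathbf b,\mathbf c\in R$, the coordinatewise tuple $\mathbf a-\mathbf b+\mathbf c$ lies in $R$. *)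

From HB Require Import structures.
From mathcomp Require Import all_boot all_order all_algebra.
Set Implicit Arguments. Unset Strict Implicit. Unset Printing Implicit Defensive.
Import GRing.Theory.
Local Open Scope ring_scope.

(* A tuple of the multi-sorted relation: for each sort i : 'I_s, a block of
   k i values in 'Z_(p i ^ m i). *)
Notation mtuple p m k :=
  {dffun forall i, {ffun 'I_(k i) -> 'Z_(p i ^ m i)}}.

Definition affine_op (s : nat) (p m k : 'I_s -> nat)
  (a b c : mtuple p m k) : mtuple p m k :=
  [ffun i => [ffun j => a i j - b i j + c i j]].

Definition affine_invariant (s : nat) (p m k : 'I_s -> nat)
  (R : {set mtuple p m k}) : Prop :=
  forall a b c, a \in R -> b \in R -> c \in R -> affine_op a b c \in R.

Definition pr_block (s : nat) (p m k : 'I_s -> nat)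
  (R : {set mtuple p m k}) (i : 'I_s) : {set {ffun 'I_(k i) -> 'Z_(p i ^ m i)}} :=
  [set b | [exists a : mtuple p m k, (a \in R) && (a i == b)]].

Definition prod_blocks (s : nat) (p m k : 'I_s -> nat)
  (R : {set mtuple p m k}) : {set mtuple p m k} :=
  [set a : mtuple p m k | [forall i : 'I_s, a i \in pr_block R i]].

From mathcomp Require Import all_boot all_order all_algebra.
Set Implicit Arguments. Unset Strict Implicit. Unset Printing Implicit Defensive.
Import GRing.Theory.
Local Open Scope ring_scope.

(* The moduli p_i^m_i are pairwise coprime, so by the Chinese remainder theorem
   some n is 1 modulo the i-th modulus and 0 modulo all others.  Iterating
   z |-> a - b + z n times from b gives b + n(a - b), which lies in R and equals
   a on the block of sort i and b on every other block.  Patching the blocks of a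
   tuple of the product one sort at a time in this way stays inside R. *)

Lemma Zp_mulrn_mod (N : nat) (v : 'Z_N) (n : nat) :
  (1 < N)%N -> v *+ n = v *+ (n %% N).
Proof.
by move=> N_gt1; rewrite -[v *+ n]mulr_natr -[v *+ (n %% N)]mulr_natr Zp_nat_mod.
Qed.

Lemma chinese_indicator (I : finType) (N : I -> nat) (i : I) :
  (forall l, i != l -> coprime (N i) (N l)) ->
  exists n, n = 1 %[mod N i] /\ forall l, l != i -> n = 0 %[mod N l].
Proof.
move=> coN; pose M := (\prod_(l | l != i) N l)%N.
have coM : coprime (N i) M.
  apply: (big_ind (coprime (N i))).
  - exact: coprimen1.
  - by move=> x y cox coy; rewrite coprimeMr cox coy.
  - by move=> l; rewrite eq_sym; apply: coN.
exists (chinese (N i) M 1 0); split; first exact: chinese_modl.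
move=> l li; have dvd_lM : (N l %| M)%N by rewrite /M (bigD1 l) ?dvdn_mulr.
by rewrite -(modn_dvdm _ dvd_lM) (chinese_modr coM) mod0n.
Qed.

Section AffineSplice.
Variables (s : nat) (p m k : 'I_s -> nat).
Implicit Types (R : {set mtuple p m k}) (a b : mtuple p m k).

Definition splice (i : 'I_s) a b : mtuple p m k :=
  [ffun l => if l == i then a l else b l].

Lemma iter_affine_opE a b n i j :
  iter n (affine_op a b) b i j = b i j + (a i j - b i j) *+ n.
Proof.
elim: n => [|n IHn]; first by rewrite mulr0n addr0.
by rewrite iterS /affine_op !ffunE IHn mulrSr addrC -addrA.
Qed.

Lemma affine_invariant_iter R a b n :
  affine_invariant R -> a \in R -> b \in R -> iter n (affine_op a b) b \in R.
Proof. by move=> affR aR bR; elim: n => [|n IHn] //=; apply: affR. Qed.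

Hypothesis moduli_gt1 : forall i, (1 < p i ^ m i)%N.
Hypothesis moduli_coprime :
  forall i l, i != l -> coprime (p i ^ m i) (p l ^ m l).

Lemma affine_invariant_splice R i a b :
  affine_invariant R -> a \in R -> b \in R -> splice i a b \in R.
Proof.
move=> affR aR bR.
have [n [n_i n_l]] :=
  chinese_indicator (N := fun l => (p l ^ m l)%N) (@moduli_coprime i).
suff -> : splice i a b = iter n (affine_op a b) b by apply: affine_invariant_iter.
apply/ffunP => l; rewrite ffunE.
case: eqVneq => [->|li]; apply/ffunP => j; rewrite iter_affine_opE Zp_mulrn_mod //.
  by rewrite n_i modn_small // addrC subrK.
by rewrite n_l // mod0n mulr0n addr0.
Qed.

Lemma prod_blocks_agree R a (r : seq 'I_s) :
  affine_invariant R -> a \in prod_blocks R -> (exists b, b \in R) ->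
  exists2 z, z \in R & {in r, forall l, z l = a l}.
Proof.
move=> affR; rewrite inE => /forallP a_pr [b bR].
elim: r => [|i r [z zR z_r]]; first by exists b.
have := a_pr i; rewrite inE => /existsP [c /andP [cR /eqP c_i]].
exists (splice i c z); first exact: affine_invariant_splice.
move=> l; rewrite inE ffunE; case: eqP => [-> _ //|_ /= l_r].
exact: z_r.
Qed.

End AffineSplice.

Lemma coprime_prime_powers (p q a b : nat) :
  prime p -> prime q -> p != q -> (0 < a)%N -> (0 < b)%N ->
  coprime (p ^ a) (q ^ b).
Proof.
move=> pp pq pq_neq a_gt0 b_gt0.
by rewrite coprime_pexpl // coprime_pexpr // prime_coprime // dvdn_prime2.
Qed.

Lemma subset_prod_blocks (s : nat) (p m k : 'I_s -> nat) (R : {set mtuple p m k}) :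
  R \subset prod_blocks R.
Proof.
apply/subsetP => a aR; rewrite inE; apply/forallP => i; rewrite inE.
by apply/existsP; exists a; rewrite aR eqxx.
Qed.

Theorem lemma4p4 (s : nat) (p m k : 'I_s -> nat) (R : {set mtuple p m k}) :
  (0 < s)%N ->
  (forall i, prime (p i)) ->
  injective p ->
  (forall i, (1 <= m i)%N) ->
  affine_invariant R ->
  R = prod_blocks R.
Proof.
move=> s_gt0 p_prime p_inj m_gt0 affR.
have moduli_gt1 i : (1 < p i ^ m i)%N.
  by rewrite -(expn0 (p i)) ltn_exp2l ?prime_gt1.
have moduli_coprime i l : i != l -> coprime (p i ^ m i) (p l ^ m l).
  by move=> il; rewrite coprime_prime_powers // (inj_eq p_inj).
apply/eqP; rewrite eqEsubset subset_prod_blocks /=; apply/subsetP => a a_pr.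
have R_nonempty : exists b, b \in R.
  move: a_pr; rewrite inE => /forallP /(_ (Ordinal s_gt0)).
  by rewrite inE => /existsP [b /andP [bR _]]; exists b.
have [z zR z_a] :=
  prod_blocks_agree moduli_gt1 moduli_coprime (enum 'I_s) affR a_pr R_nonempty.
have -> : a = z by apply/ffunP => l; rewrite z_a ?mem_enum.
exact: zR.
Qed.
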